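(* For all $n\ge 3$, the state complexity of $((U_{\{0\},n}(a,b,c))^* )^R$ is $2^n$.
   Context: The state complexity of a regular language is the number of states of its minimal complete DFA. For $n\ge 3$, $\mathcal{U}_n(a,b,c)$ is the DFA over $\{a,b,c\}$ with states $\{0,\dots,n-1\}$ and initial state $0$, where $a$ maps $i\mapsto i+1\pmod n$, $b$ swaps $0$ and $1$ fixing other states, and $c$ maps $n-1$ to $0$ fixing other states. $U_{\{0\},n}(a,b,c)$ is the language accepted by $\mathcal{U}_n(a,b,c)$ with final state set $\{0\}$. $L^*$ is the Kleene star and $L^R$ the reversal of $L$. *)

From Stdlib Require Import List.
From mathcomp Require Import all_boot.
Set Implicit Arguments. Unset Strict Implicit. Unset Printing Implicit Defensive.

Inductive letter := La | Lb | Lc.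

Definition word := seq letter.
Definition language := word -> Prop.

Record dfa (k : nat) := DFA {
  dfa_init : 'I_k;
  dfa_delta : 'I_k -> letter -> 'I_k;
  dfa_final : pred 'I_k }.

Definition dfa_accepts k (A : dfa k) (w : word) : bool :=
  dfa_final A (foldl (dfa_delta A) (dfa_init A) w).

Definition recognizes k (A : dfa k) (L : language) : Prop :=
  forall w, dfa_accepts A w <-> L w.

Definition state_complexity_is (L : language) (m : nat) : Prop :=
  (exists A : dfa m, recognizes A L) /\
  (forall k (A : dfa k), recognizes A L -> m <= k).

Definition star (L : language) : language :=
  fun w => exists ws : seq word, List.Forall L ws /\ w = flatten ws.

Definition reversal (L : language) : language := fun w => L (rev w).

(* The DFA U_n(a,b,c) on states {0,...,n-1} (encoded as nats), initial 0:
   a : i -> i+1 mod n; b : swaps 0 and 1; c : n-1 -> 0, others fixed. *)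
Definition U_step (n : nat) (i : nat) (x : letter) : nat :=
  match x with
  | La => (i + 1) %% n
  | Lb => if i == 0 then 1 else if i == 1 then 0 else i
  | Lc => if i == n - 1 then 0 else i
  end.

Definition U0 (n : nat) : language :=
  fun w => foldl (U_step n) 0 w = 0.

From mathcomp Require Import all_boot zify.
Set Implicit Arguments. Unset Strict Implicit. Unset Printing Implicit Defensive.

(* Since U_{{0},n} accepts exactly the words looping on the state 0, it is
   closed under concatenation and contains the empty word, so it is its own
   Kleene star; hence w lies in L = ((U_{{0},n})^* )^R iff rev w sends 0 to 0.

   Upper bound: after reading w, the relevant information is the set of
   states i such that rev w sends i to 0.  Reading a letter x replaces this
   set by its preimage under x, so the subsets of {0..n-1} form a DFA with
   2^n states recognizing L.

   Lower bound: every subset S of {0..n-1} is of the form {i | f i = 0} for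
   some transformation f induced by a word (Lemma [realizable_all]).  The
   induced transformations form a monoid containing the rotation a, the
   swap b and the merge c; conjugating by rotations gives all adjacent
   transpositions, hence all transpositions, and conjugating c by a
   permutation gives every "redirection" y |-> x.  Starting from the empty
   set, points are added one at a time by redirections and transpositions.
   Finally the suffixes a^i separate these 2^n sets, so any DFA for L has
   at least 2^n states (Lemma [dfa_size_ge_sets]). *)

Section FiniteStateDFA.
Variables (T : finType) (q0 : T) (d : T -> letter -> T) (F : pred T).

Definition fin_dfa : dfa #|T| :=
  DFA (enum_rank q0) (fun k x => enum_rank (d (enum_val k) x))
      (fun k => F (enum_val k)).

Lemma fin_dfa_accepts w : dfa_accepts fin_dfa w = F (foldl d q0 w).
Proof.
rewrite /dfa_accepts /=; elim: w q0 => [|x w IH] q /=; first by rewrite enum_rankK.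
by rewrite enum_rankK IH.
Qed.

End FiniteStateDFA.

Lemma card_le_surj (T T' : finType) (f : T -> T') :
  (forall y, exists x, f x = y) -> #|T'| <= #|T|.
Proof.
move=> fsurj; apply: leq_trans (leq_image_card f T).
by apply/subset_leq_card/subsetP => y _; have [x <-] := fsurj y; exact: image_f.
Qed.

(* Fooling-set bound: if every subset S of I is the set of suffixes v i that
   some prefix u completes into L, then every DFA for L has 2^#|I| states,
   because the states reached after the various u must all differ. *)
Lemma dfa_size_ge_sets (I : finType) (L : language) (v : I -> word) :
  (forall S : {set I}, exists u, forall i, L (u ++ v i) <-> i \in S) ->
  forall k (A : dfa k), recognizes A L -> #|{set I}| <= k.
Proof.
move=> hsep k A hA; rewrite -[k]card_ord.
apply: (card_le_surj (f := fun q => [set i | dfa_final A (foldl (dfa_delta A) q (v i))])).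
move=> S; have [u hu] := hsep S.
exists (foldl (dfa_delta A) (dfa_init A) u); apply/setP => i.
rewrite in_set -foldl_cat; apply/idP/idP => [/hA/hu | /hu/hA] //.
Qed.

Lemma card_sets n : #|{set 'I_n}| = 2 ^ n.
Proof. by rewrite -cardsT -powersetT card_powerset cardsT card_ord. Qed.

Lemma star_loop (Q : Type) (d : Q -> letter -> Q) (q : Q) w :
  star (fun u => foldl d q u = q) w <-> foldl d q w = q.
Proof.
split=> [[ws [hws ->]] | hw]; last by exists [:: w]; split; [constructor | rewrite /= cats0].
by elim: hws => [|u us hu _ IH] //=; rewrite foldl_cat hu.
Qed.

Definition run n i (u : word) : nat := foldl (U_step n) i u.

Lemma step_lt n i x : 1 < n -> i < n -> U_step n i x < n.
Proof.
move=> hn hi; case: x => /=; first by rewrite ltn_pmod //; lia.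
- by case: ifP => _; [lia | case: ifP => _; lia].
- by case: ifP => _; lia.
Qed.

Lemma run_lt n i u : 1 < n -> i < n -> run n i u < n.
Proof. by move=> hn; elim: u i => [|x u IH] i hi //=; apply/IH/step_lt. Qed.

Lemma lang_rev n w : reversal (star (U0 n)) w <-> run n 0 (rev w) = 0.
Proof. exact: star_loop. Qed.

(* [action n f]: f agrees on {0..n-1} with the transformation of some word;
   these transformations form a monoid, composing left to right. *)
Definition action n (f : nat -> nat) : Prop :=
  exists u, forall i, i < n -> run n i u = f i.

Section TransitionMonoid.
Variables (n : nat) (hn : 1 < n).

Lemma action_ext f g : action n f -> (forall i, i < n -> f i = g i) -> action n g.
Proof. by move=> [u hu] hfg; exists u => i hi; rewrite hu ?hfg. Qed.

Lemma action_letter x : action n (fun i => U_step n i x).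
Proof. by exists [:: x]. Qed.

Lemma action_comp f g : action n f -> action n g -> action n (fun i => g (f i)).
Proof.
move=> [u hu] [v hv]; exists (u ++ v) => i hi.
have -> : run n i (u ++ v) = run n (run n i u) v by rewrite /run foldl_cat.
by rewrite hu // hv // -hu // run_lt.
Qed.

Definition rot m i := (i + m) %% n.

Lemma modn_shift m i : i < n -> m <= n ->
  (i + m) %% n = if i + m < n then i + m else i + m - n.
Proof.
move=> hi hm; case: ifP => h; first by rewrite modn_small.
by rewrite -{1}(subnK (_ : n <= i + m)) ?modnDr ?modn_small //; lia.
Qed.

Lemma action_rot m : action n (rot m).
Proof.
elim: m => [|m IH]; first by exists [::] => i hi; rewrite /rot addn0 modn_small.
apply: action_ext (action_comp IH (action_letter La)) _ => i _ /=.
by rewrite /rot modnDml addn1 addnS.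
Qed.

Definition tr (a b k : nat) := if k == a then b else if k == b then a else k.

Lemma trK a b : involutive (tr a b).
Proof. by move=> k; rewrite /tr; repeat case: eqP; lia. Qed.

Lemma tr_eq a b k l : (tr a b k == l) = (k == tr a b l).
Proof. by rewrite /tr; repeat case: eqP; lia. Qed.

Lemma tr_left a b : tr a b a = b.
Proof. by rewrite /tr eqxx. Qed.

Lemma tr_lt a b k : a < n -> b < n -> k < n -> tr a b k < n.
Proof. by rewrite /tr; repeat case: eqP. Qed.

(* The swap of j and j+1 is b conjugated by the rotation by j. *)
Lemma action_adjacent j : j.+1 < n -> action n (tr j j.+1).
Proof.
move=> hj; have hb := action_comp (action_rot (n - j)) (action_letter Lb).
apply: action_ext (action_comp hb (action_rot j)) _ => i hi.
rewrite /rot /= (modn_shift (i := i)); [|lia|lia].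
rewrite modn_shift; [|by repeat case: ifP; lia | lia].
by rewrite /tr /=; repeat (case: ifP || case: eqP); lia.
Qed.

(* The swap of i and j+1 is the swap of i and j conjugated by the swap of j
   and j+1, so all transpositions arise by induction on the distance. *)
Lemma action_tr a b : a < n -> b < n -> action n (tr a b).
Proof.
wlog hab : a b / a < b.
  move=> hw ha hb; case: (ltngtP a b) => hab; first exact: hw.
    by apply: action_ext (hw b a _ hb ha) _ => // k _; rewrite /tr; repeat case: eqP; lia.
  by exists [::] => k _ /=; rewrite /tr; repeat case: eqP; lia.
move=> _ hb; rewrite -(subnK hab) in hb *; elim: (b - a.+1) hb => [|d IH] hd.
  exact: action_adjacent.
have hs : action n (tr (d + a.+1) (d + a.+1).+1) by apply: action_adjacent; lia.
have ht : action n (tr a (d + a.+1)) by apply: IH; lia.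
apply: action_ext (action_comp (action_comp hs ht) hs) _ => k _.
by rewrite /tr; repeat case: eqP; lia.
Qed.

(* The redirection of y to x: y |-> x, every other state fixed. It is c
   conjugated by a permutation p sending 0 to x and n-1 to y. *)
Definition redirect (y x k : nat) := if k == y then x else k.

Lemma action_redirect x y : x < n -> y < n -> x != y -> action n (redirect y x).
Proof.
move=> hx hy hxy; set z := tr 0 x y.
have hz0 : z != 0 by rewrite /z tr_eq tr_left eq_sym.
pose p k := tr 0 x (tr n.-1 z k); pose p' k := tr n.-1 z (tr 0 x k).
have hp : action n p by apply: action_comp; apply: action_tr; rewrite ?tr_lt //; lia.
have hp' : action n p' by apply: action_comp; apply: action_tr; rewrite ?tr_lt //; lia.
apply: action_ext (action_comp (action_comp hp' (action_letter Lc)) hp) _ => k _ /=.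
have -> /= : (p' k == n - 1) = (k == y).
  have -> : n - 1 = n.-1 by lia.
  by rewrite /p' !tr_eq tr_left /z trK.
rewrite /redirect; case: ifP => _; last by rewrite /p /p' !trK.
rewrite /p; have -> : tr n.-1 z 0 = 0 by move: hz0; rewrite /tr; repeat case: eqP; lia.
exact: tr_left.
Qed.

Definition realizable (p : nat -> bool) : Prop :=
  exists u, forall i, i < n -> (run n i u == 0) = p i.

Lemma realizable_action f p : action n f -> (forall i, i < n -> (f i == 0) = p i) ->
  realizable p.
Proof. by move=> [u hu] hp; exists u => i hi; rewrite hu ?hp. Qed.

Lemma realizable_ext p q : realizable p -> (forall i, i < n -> p i = q i) -> realizable q.
Proof. by move=> [u hu] hpq; exists u => i hi; rewrite hu ?hpq. Qed.

(* The empty set: first c, then a, never reaches 0. *)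
Lemma realizable_empty : realizable (fun _ => false).
Proof.
apply: realizable_action (action_comp (action_letter Lc) (action_letter La)) _ => i hi /=.
by rewrite modn_shift ?step_lt //=; repeat case: ifP; lia.
Qed.

(* Adding a point y: redirect y to a point x of p, or use the transposition
   of 0 and y when p is empty. *)
Lemma realizable_add p y : realizable p -> y < n -> realizable (fun i => p i || (i == y)).
Proof.
move=> [u hu] hy.
case: (boolP (p y)) => hpy.
  by exists u => i hi; rewrite hu //; case: eqP => [->|]; rewrite ?orbT ?orbF.
case: (boolP (has p (iota 0 n))) => [hx | hnone].
  have [x /[!mem_iota] /andP[_ hxn] hpx] := hasP hx.
  have hxy : x != y by apply: contraNneq hpy => <-.
  have hrun : action n (run n ^~ u) by exists u.
  apply: realizable_action (action_comp (action_redirect hxn hy hxy) hrun) _ => i hi.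
  rewrite /redirect; case: (eqVneq i y) => [->|_]; last by rewrite hu ?orbF.
  by rewrite hu // hpx orbT.
apply: realizable_action (action_tr (_ : 0 < n) hy) _ => [|i hi]; first lia.
rewrite tr_eq /tr eqxx; case: (boolP (p i)) => // hpi.
by case/hasP: hnone; exists i; rewrite ?mem_iota.
Qed.

Lemma realizable_all p : realizable p.
Proof.
suff hpre : forall m, m <= n -> realizable (fun i => p i && (i < m)).
  by apply: realizable_ext (hpre n _) _ => // i ->; rewrite andbT.
elim=> [|m IH] hm.
  by apply: realizable_ext realizable_empty _ => i _; rewrite andbF.
have hIH := IH (ltnW hm).
have hsplit i : p i && (i < m.+1) = p i && (i < m) || p m && (i == m).
  by case: (ltngtP i m) => [hi|hi|->]; rewrite ?andbF ?ltnn ?orbF ?andbT //; lia.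
case: (boolP (p m)) => hpm.
  by apply: realizable_ext (realizable_add hIH hm) _ => i _; rewrite hsplit hpm.
by apply: realizable_ext hIH _ => i _; rewrite hsplit (negbTE hpm) orbF.
Qed.

End TransitionMonoid.

Definition preimage_step n (S : {set 'I_n}) (x : letter) : {set 'I_n} :=
  [set i : 'I_n | [exists j in S, val j == U_step n i x]].

Definition has_zero n (S : {set 'I_n}) : bool := [exists j in S, val j == 0].

Definition zero_set n (u : word) : {set 'I_n} := [set i : 'I_n | run n i u == 0].

Lemma exists_val n (S : {set 'I_n}) (k : 'I_n) : [exists j in S, val j == val k] = (k \in S).
Proof.
apply/existsP/idP => [[j /andP[hj /eqP /val_inj <-]] // | hkS].
by exists k; rewrite hkS eqxx.
Qed.

Lemma zero_set_onto n (S : {set 'I_n}) : 1 < n -> exists u, zero_set n u = S.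
Proof.
move=> hn; have [u hu] := realizable_all hn (fun k => [exists j in S, val j == k]).
by exists u; apply/setP => i; rewrite inE hu // exists_val.
Qed.

Lemma preimage_run n w : 1 < n ->
  foldl (@preimage_step n) (zero_set n [::]) w = zero_set n (rev w).
Proof.
move=> hn; elim/last_ind: w => [|w x IH] //.
rewrite foldl_rcons IH rev_rcons; apply/setP => i; rewrite !inE.
by rewrite (exists_val _ (Ordinal (step_lt x hn (ltn_ord i)))) inE.
Qed.

Lemma has_zero_set n u : 1 < n -> has_zero (zero_set n u) = (run n 0 u == 0).
Proof.
move=> hn; have h0 : 0 < n by lia.
by rewrite /has_zero (exists_val _ (Ordinal h0)) inE.
Qed.

Lemma subset_dfa_recognizes n : 1 < n ->
  recognizes (fin_dfa (zero_set n [::]) (@preimage_step n) (@has_zero n))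
             (reversal (star (U0 n))).
Proof.
move=> hn w; rewrite fin_dfa_accepts preimage_run // has_zero_set // lang_rev.
by split=> /eqP.
Qed.

Lemma run_rotate n i : i < n -> run n 0 (nseq i La) = i.
Proof.
move=> hi; have hgen k j : j + k < n -> run n j (nseq k La) = j + k.
  elim: k j => [|k IH] j hjk /=; first by rewrite addn0.
  by rewrite modn_small ?IH; lia.
exact: hgen i 0 hi.
Qed.

Lemma rotate_separates n u (i : 'I_n) :
  reversal (star (U0 n)) (rev u ++ nseq i La) <-> i \in zero_set n u.
Proof.
rewrite lang_rev rev_cat rev_nseq revK inE.
rewrite /run foldl_cat -/(run n 0 _) run_rotate // -/(run _ _ u).
by split=> /eqP.
Qed.

Theorem theorem7 (n : nat) (hn : 3 <= n) :
  state_complexity_is (reversal (star (U0 n))) (2 ^ n).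
Proof.
have hn1 : 1 < n by lia.
rewrite -card_sets; split.
  by eexists; apply: subset_dfa_recognizes.
apply: (dfa_size_ge_sets (v := fun i : 'I_n => nseq i La)) => S.
have [u <-] := zero_set_onto S hn1.
by exists (rev u) => i; apply: rotate_separates.
Qed.
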